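(* There exists a unique pointwise minimal pair of maps $t\mapsto\sigma_P(t)$, $P\in\{1,2\}$, assigning to every well-formed tree $t$ over $\tilde A_{i,k}$ a $P$-signature $\sigma_P(t)$, such that for every player $P$, all well-formed trees $t,t_L,t_R$ and all $j\in\{i,\ldots,k\}$: (1) $\sigma_P(t)=\infty$ iff $P$ does not win $\mathcal G(t)$; (2) $\sigma_P(\sim(t))=(0,\ldots,0)$ if $P$ wins $\mathcal G(\sim(t))$; (3) if $\sigma_P(t)=(\theta_{i'},\ldots,\theta_{k'})$ and $j$ is $P$-winning, then $\sigma_P(p_j(t))=(\theta_{i'},\ldots,\theta_{j-1},0,\ldots,0)$ (coordinates with index $<j$ kept, the others $0$); (4) if $\sigma_P(t)=(\theta_{i'},\ldots,\theta_{k'})$ and $j$ is $P$-losing, then $\sigma_P(p_j(t))=(\theta_{i'},\ldots,\theta_{j-2},\theta_j+1,0,\ldots,0)$; (5) $\sigma_P(c_P(t_L,t_R))=\min\{\sigma_P(t_L),\sigma_P(t_R)\}$; (6) $\sigma_P(c_{\bar P}(t_L,t_R))=\max\{\sigma_P(t_L),\sigma_P(t_R)\}$. Pointwise minimal means: for every pair $(\sigma'_1,\sigma'_2)$ satisfying (1)–(6), every $P$ and every well-formed $t$, $\sigma_P(t)\le_{lex}\sigma'_P(t)$.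
   Context: Fix natural numbers $i<k$. Trees over a ranked alphabet are partial maps $t:\omega^*\to A$ with non-empty prefix-closed domain where a node with an $m$-ary label has exactly the children $u0,\ldots,u(m-1)$; $a(t_0,\ldots,t_{m-1})$ is the tree with root label $a$ and children subtrees $t_0,\ldots$. The alphabet $\tilde A_{i,k}$ has unary letters $p_i,\ldots,p_k$, a unary letter $\sim$, and binary letters $c_1,c_2$. Players are $1,2$; $\bar P$ is the opponent of $P$. A tree $t$ is well-formed if no branch has infinitely many $\sim$. A node $u$ is switched if an odd number of strict prefixes $w\prec u$ have $t(w)=\sim$, kept otherwise. The game $\mathcal G(t)$: positions are nodes, moves to children, start at the root; $u$ is controlled by $P$ iff ($u$ kept and $t(u)=c_P$) or ($u$ switched and $t(u)=c_{\bar P}$). An infinite play (branch), which is eventually kept or eventually switched, is won by player 1 iff it is kept and the least $j$ with infinitely many nodes labelled $p_j$ is even, or it is switched and this $j$ is odd (if no priority letter occurs infinitely often take $j=k$). $P$ wins $\mathcal G(t)$ if $P$ has a winning strategy. A number $j\in\{i,\ldots,k\}$ is $P$-losing if it is odd (for $P=1$) resp. even (for $P=2$), and $P$-winning otherwise; $i',k'$ denote the least and largest $P$-losing numbers. A $P$-signature is either $\infty$ or a tuple $(\theta_{i'},\theta_{i'+2},\ldots,\theta_{k'})$ of countable ordinals indexed by the $P$-losing numbers; tuples are ordered lexicographically ($\le_{lex}$) with smaller indices more significant, and $\infty$ is the largest element. *)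

From mathcomp Require Import all_boot.
Set Implicit Arguments. Unset Strict Implicit. Unset Printing Implicit Defensive.

(* These properties
   characterize omega_1 up to order isomorphism. *)
Record Omega1 := {
  ord :> Type;
  olt : ord -> ord -> Prop;
  olt_irrefl : forall x, ~ olt x x;
  olt_trans : forall x y z, olt x y -> olt y z -> olt x z;
  olt_total : forall x y, olt x y \/ x = y \/ olt y x;
  olt_wf : well_founded olt;
  olt_countable_pred : forall x : ord,
      exists f : nat -> ord, forall y, olt y x -> exists n, f n = y;
  olt_uncountable : forall f : nat -> ord, exists x, forall n, f n <> x;
  ozero : ord;
  ozero_min : forall x, ~ olt x ozero;
  osucc : ord -> ord;
  osucc_gt : forall x, olt x (osucc x);
  osucc_least : forall x y, olt x y -> y = osucc x \/ olt (osucc x) y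
}.

Inductive letter := Pr of nat | Sim | C1 | C2.
Definition arity (a : letter) : nat :=
  match a with Pr _ => 1 | Sim => 1 | C1 => 2 | C2 => 2 end.

Inductive player := P1 | P2.
Definition opp (P : player) := if P is P1 then P2 else P1.
Definition cl (P : player) : letter := if P is P1 then C1 else C2.

Definition tree := seq nat -> option letter.

(* node u . n is  rcons u n *)
Definition is_tree (i k : nat) (t : tree) : Prop :=
  t [::] <> None /\
  (forall u n, t (rcons u n) <> None -> t u <> None) /\
  (forall u a, t u = Some a ->
     (forall n, t (rcons u n) <> None <-> n < arity a) /\
     (forall j, a = Pr j -> i <= j <= k)).

Definition un (a : letter) (t : tree) : tree := fun u =>
  match u with [::] => Some a | 0 :: u' => t u' | _ => None end.
Definition bin (a : letter) (tL tR : tree) : tree := fun u =>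
  match u with
  | [::] => Some a | 0 :: u' => tL u' | 1 :: u' => tR u' | _ => None end.

Definition pref (b : nat -> nat) (n : nat) : seq nat := map b (iota 0 n).
Definition is_branch (t : tree) (b : nat -> nat) : Prop :=
  forall n, t (pref b n) <> None.

Definition is_sim (o : option letter) : bool :=
  if o is Some Sim then true else false.
Definition is_c (P : player) (o : option letter) : bool :=
  match P, o with P1, Some C1 => true | P2, Some C2 => true | _, _ => false end.

Definition well_formed (i k : nat) (t : tree) : Prop :=
  is_tree i k t /\
  forall b, is_branch t b ->
    exists N, forall n, N <= n -> ~~ is_sim (t (pref b n)).

(* u switched: odd number of strict prefixes labelled ~ *)
Definition switched (t : tree) (u : seq nat) : bool :=
  odd (count (fun m => is_sim (t (take m u))) (iota 0 (size u))).

Definition controlled (t : tree) (P : player) (u : seq nat) : bool :=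
  (~~ switched t u && is_c P (t u)) || (switched t u && is_c (opp P) (t u)).

Definition inf_often (t : tree) (b : nat -> nat) (j : nat) : Prop :=
  forall N, exists2 n, N <= n & t (pref b n) = Some (Pr j).

Definition least_inf (k : nat) (t : tree) (b : nat -> nat) (j : nat) : Prop :=
  (inf_often t b j /\ forall j', j' < j -> ~ inf_often t b j') \/
  ((forall j', ~ inf_often t b j') /\ j = k).

Definition p_winning (P : player) (j : nat) : bool :=
  if P is P1 then ~~ odd j else odd j.
Definition p_losing (P : player) (j : nat) : bool := ~~ p_winning P j.

Definition branch_won (k : nat) (P : player) (t : tree) (b : nat -> nat) : Prop :=
  exists j, least_inf k t b j /\
   (((exists N, forall n, N <= n -> ~~ switched t (pref b n)) /\ p_winning P j) \/
    ((exists N, forall n, N <= n -> switched t (pref b n)) /\ p_losing P j)).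

Definition wins (k : nat) (P : player) (t : tree) : Prop :=
  exists s : seq nat -> nat,
    (forall u, controlled t P u -> s u < 2) /\
    forall b, is_branch t b ->
      (forall n, controlled t P (pref b n) -> b n = s (pref b n)) ->
      branch_won k P t b.

Definition losing_idx (i k : nat) (P : player) : seq nat :=
  [seq j <- iota i (k - i).+1 | p_losing P j].

(* None = infinity; Some th = tuple indexed by losing_idx *)
Definition sig (O : Omega1) := option (seq O).

Definition sig_shape (i k : nat) (P : player) (O : Omega1) (s : sig O) : Prop :=
  if s is Some th then size th = size (losing_idx i k P) else True.

Fixpoint lex_le (O : Omega1) (s t : seq O) : Prop :=
  match s with
  | [::] => match t with [::] => True | _ => False end
  | x :: s' => match t with
               | [::] => False
               | y :: t' => olt x y \/ (x = y /\ lex_le s' t')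
               end
  end.

Definition sig_le (O : Omega1) (a b : sig O) : Prop :=
  match a, b with
  | _, None => True
  | None, Some _ => False
  | Some s, Some t => lex_le s t
  end.

Definition sig_min (O : Omega1) (a b c : sig O) : Prop :=
  (sig_le a b /\ c = a) \/ (sig_le b a /\ c = b).
Definition sig_max (O : Omega1) (a b c : sig O) : Prop :=
  (sig_le a b /\ c = b) \/ (sig_le b a /\ c = a).

(* conditions (1)-(6) (plus: values are P-signatures) *)
Definition good (i k : nat) (O : Omega1) (sigma : player -> tree -> sig O) : Prop :=
  forall P : player,
  let L := losing_idx i k P in
  (forall t, well_formed i k t -> sig_shape i k P (sigma P t)) /\
  (forall t, well_formed i k t -> (sigma P t = None <-> ~ wins k P t)) /\
  (forall t, well_formed i k t -> wins k P (un Sim t) ->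
     sigma P (un Sim t) = Some (nseq (size L) (ozero O))) /\
  (forall t j th, well_formed i k t -> i <= j <= k -> p_winning P j ->
     sigma P t = Some th ->
     sigma P (un (Pr j) t) =
       Some [seq (if p.1 < j then p.2 else ozero O) | p <- zip L th]) /\
  (forall t j th, well_formed i k t -> i <= j <= k -> p_losing P j ->
     sigma P t = Some th ->
     sigma P (un (Pr j) t) =
       Some [seq (if p.1 < j then p.2
                  else if p.1 == j then osucc p.2 else ozero O) | p <- zip L th]) /\
  (forall tL tR, well_formed i k tL -> well_formed i k tR ->
     sig_min (sigma P tL) (sigma P tR) (sigma P (bin (cl P) tL tR))) /\
  (forall tL tR, well_formed i k tL -> well_formed i k tR ->
     sig_max (sigma P tL) (sigma P tR) (sigma P (bin (cl (opp P)) tL tR))).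

Definition pointwise_minimal (i k : nat) (O : Omega1)
    (sigma : player -> tree -> sig O) : Prop :=
  forall sigma', good i k sigma' ->
    forall P t, well_formed i k t -> sig_le (sigma P t) (sigma' P t).

(* Rules (2)-(6) say that sigma_P is a fixed point of a monotone operator on
   signature assignments, capped by rule (1) at the trees P wins; so the least
   prefixed point of that operator, taken pointwise in the well-ordered
   lexicographic order, satisfies them and lies below every assignment that
   does, and uniqueness is antisymmetry.  What remains is rule (1): the least
   prefixed point must be finite wherever P wins.  Fix a winning strategy for P.
   On the nodes reached by kept plays consistent with it, "descend to a deeper
   node meeting the P-losing priority j and nothing smaller" is well founded,
   since an infinite descent would be a consistent play that P loses.  The
   ranks of a node in these relations, one for each P-losing j, form a
   signature, and these rank signatures are a finite prefixed point. *)

From mathcomp Require Import all_boot.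
From Stdlib Require Import Classical ClassicalEpsilon FunctionalExtensionality ProofIrrelevance.
Set Implicit Arguments. Unset Strict Implicit. Unset Printing Implicit Defensive.

Section Ordinals.
Variable O : Omega1.
Implicit Types x y z : O.

Definition ole x y := olt x y \/ x = y.

Lemma olt_asym x y : olt x y -> olt y x -> False.
Proof. by move=> xy yx; apply: (olt_irrefl (olt_trans xy yx)). Qed.

Lemma ole_lt_trans x y z : ole x y -> olt y z -> olt x z.
Proof. by case=> [xy|->] // yz; apply: olt_trans xy yz. Qed.

Lemma nolt_ole x y : ~ olt y x -> ole x y.
Proof. by move=> yx; case: (olt_total x y) => [|[|]]; [left|right|]. Qed.

Lemma ozero_ole x : ole (ozero O) x.
Proof. exact/nolt_ole/ozero_min. Qed.

Lemma osucc_ole x y : olt x y -> ole (osucc x) y.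
Proof. by move=> xy; case: (osucc_least xy) => [->|]; [right|left]. Qed.

Lemma osucc_mono x y : olt x y -> olt (osucc x) (osucc y).
Proof. by move=> xy; apply: ole_lt_trans (osucc_ole xy) (osucc_gt y). Qed.

Lemma olt_least (p : O -> Prop) : (exists x, p x) ->
  exists x, p x /\ forall y, p y -> ~ olt y x.
Proof.
case=> x; elim/(well_founded_ind (@olt_wf O)): x => x IH px.
case: (classic (exists y, p y /\ olt y x)) => [[y [py yx]]|nlt]; first exact: IH yx py.
by exists x; split=> // y py yx; apply: nlt; exists y.
Qed.

(* The countably many predecessors of all the [f n] cannot exhaust [O]. *)
Lemma olt_ub_nat (f : nat -> O) : exists x, forall n, olt (f n) x.
Proof.
have e n : {g : nat -> O | forall y, olt y (f n) -> exists m, g m = y}.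
  exact/constructive_indefinite_description/olt_countable_pred.
pose g m : O := if unpickle m is Some (a, n) then
  (if a is a'.+1 then sval (e n) a' else f n) else ozero O.
case: (olt_uncountable g) => x gx; exists x => n.
case: (olt_total (f n) x) => [//|[fx|xf]].
  by case: (gx (pickle (0, n))); rewrite /g pickleK.
case: (svalP (e n) x xf) => m em.
by case: (gx (pickle (m.+1, n))); rewrite /g pickleK.
Qed.

Lemma olt_ub (A : countType) (f : A -> O) : exists x, forall a, olt (f a) x.
Proof.
case: (olt_ub_nat (fun n => odflt (ozero O) (omap f (unpickle n)))) => x fx.
by exists x => a; have := fx (pickle a); rewrite pickleK.
Qed.
End Ordinals.

Section Lex.
Variable O : Omega1.
Implicit Types s t u : seq O.

Fixpoint pointwise_le s t : Prop :=
  match s, t with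
  | [::], [::] => True
  | x :: s', y :: t' => ole x y /\ pointwise_le s' t'
  | _, _ => False
  end.

Lemma lex_refl s : lex_le s s.
Proof. by elim: s => //= x s IH; right. Qed.

Lemma lex_trans s t u : lex_le s t -> lex_le t u -> lex_le s u.
Proof.
elim: s t u => [|x s IH] [|y t] [|z u] //= [xy|[exy st]] [yz|[eyz tu]].
- by left; apply: olt_trans xy yz.
- by left; rewrite -eyz.
- by left; rewrite exy.
- by right; split; [rewrite exy eyz|apply: IH st tu].
Qed.

Lemma lex_antisym s t : lex_le s t -> lex_le t s -> s = t.
Proof.
elim: s t => [|x s IH] [|y t] //= [xy|[exy st]] [yx|[eyx ts]].
- by case: (olt_asym xy yx).
- by rewrite eyx in xy; case: (olt_irrefl xy).
- by rewrite exy in yx; case: (olt_irrefl yx).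
- by rewrite exy (IH _ st ts).
Qed.

Lemma lex_total s t : size s = size t -> lex_le s t \/ lex_le t s.
Proof.
elim: s t => [|x s IH] [|y t] //= => [_|[est]]; first by left.
case: (olt_total x y) => [xy|[<-|yx]]; [by left; left| |by right; left].
by case: (IH _ est); [left|right]; right.
Qed.

Lemma lex_of_pointwise s t : pointwise_le s t -> lex_le s t.
Proof.
elim: s t => [|x s IH] [|y t] //= [[xy|<-] st]; first by left.
by right; split=> //; apply: IH.
Qed.

Lemma pointwise_le_map (A : eqType) (f g : A -> O) (r : seq A) :
  {in r, forall a, ole (f a) (g a)} -> pointwise_le (map f r) (map g r).
Proof.
elim: r => //= a r IH fg; split; first by apply: fg; rewrite inE eqxx.
by apply: IH => a' a'r; apply: fg; rewrite inE a'r orbT.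
Qed.

Lemma pointwise_nseq_ozero s : pointwise_le (nseq (size s) (ozero O)) s.
Proof. by elim: s => //= x s IH; split; first apply: ozero_ole. Qed.

Lemma lex_least n (p : seq O -> Prop) : (exists s, size s = n /\ p s) ->
  exists s, (size s = n /\ p s) /\ forall s', size s' = n -> p s' -> lex_le s s'.
Proof.
elim: n p => [|n IH] p.
  by case=> s [/size0nil -> ps]; exists [::]; split=> // s' /size0nil ->.
case=> -[|x0 s0] [] // [e0] p0.
have [x [[s1 [e1 ps1]] xmin]] : exists x, (exists s, size s = n /\ p (x :: s)) /\
    forall y, (exists s, size s = n /\ p (y :: s)) -> ~ olt y x.
  by apply: olt_least; exists x0, s0.
case: (IH (fun s => p (x :: s))); first by exists s1.
move=> s [[es ps] smin]; exists (x :: s); split; first by rewrite /= es.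
case=> // y s' [e'] ps' /=.
case: (olt_total x y) => [xy|[exy|yx]]; first by left.
  by right; split=> //; apply: smin; rewrite // exy.
by case: (xmin y) => //; exists s'.
Qed.

Lemma lex_map_zip_mono (h : nat -> O -> O) (ls : seq nat) s t :
  (forall l, (forall x y, olt x y -> olt (h l x) (h l y)) \/
             (forall l', l <= l' -> forall x, h l' x = ozero O)) ->
  sorted ltn ls -> size s = size ls -> size t = size ls -> lex_le s t ->
  lex_le [seq h p.1 p.2 | p <- zip ls s] [seq h p.1 p.2 | p <- zip ls t].
Proof.
move=> hmono; elim: ls s t => [|l ls IH] [|x s] [|y t] //= lsort [es] [et].
have lsort' := path_sorted lsort.
case=> [xy|[<- st]]; last by right; split=> //; apply: IH.
case: (hmono l) => [hl|hvan]; first by left; apply: hl.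
rewrite !hvan //; right; split=> //.
have lge : all (leq l) ls.
  apply/allP=> l' l'ls; move: lsort; rewrite (path_sortedE ltn_trans) => /andP[/allP lt _].
  exact/ltnW/lt.
elim: ls s t es et lge {IH lsort lsort'} => [|l2 ls IH] [|x2 s] [|y2 t] //= [es] [et].
by case/andP=> ll2 lge; rewrite !hvan //; right; split=> //; apply: IH.
Qed.
End Lex.

Section Signatures.
Variable O : Omega1.
Implicit Types a b c : sig O.

Definition sig_size n a := if a is Some s then size s = n else True.

Lemma sig_le_refl a : sig_le a a.
Proof. by case: a => //= s; apply: lex_refl. Qed.

Lemma sig_le_trans a b c : sig_le a b -> sig_le b c -> sig_le a c.
Proof. by case: a => [s|]; case: b => [t|]; case: c => [u|] //=; apply: lex_trans. Qed.

Lemma sig_le_antisym a b : sig_le a b -> sig_le b a -> a = b.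
Proof. by case: a; case: b => //= s t ts st; rewrite (lex_antisym st ts). Qed.

Lemma sig_le_total n a b : sig_size n a -> sig_size n b -> sig_le a b \/ sig_le b a.
Proof.
case: a => [s|]; case: b => [t|] //=; try by [left|right].
by move=> es et; apply: lex_total; rewrite es et.
Qed.

Lemma sig_least n (p : sig O -> Prop) : (forall a, p a -> sig_size n a) ->
  (exists a, p a) -> exists a, p a /\ forall b, p b -> sig_le a b.
Proof.
move=> psize [a0 pa0].
case: (classic (exists s, size s = n /\ p (Some s))) => [fin|nfin].
  case: (lex_least fin) => s [[_ ps] smin]; exists (Some s); split=> // -[t|] //= pt.
  by apply: smin => //; apply: (psize _ pt).
exists None; split=> [|[t|] //= pt]; last by case: nfin; exists t; split=> //; apply: psize pt.
by case: a0 pa0 => // t pt; case: nfin; exists t; split=> //; apply: psize pt.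
Qed.

Definition sig_inf (p : sig O -> Prop) : sig O :=
  epsilon (inhabits None) (fun a => (p a \/ a = None) /\ forall b, p b -> sig_le a b).

Lemma sig_infP n p : (forall a, p a -> sig_size n a) ->
  (p (sig_inf p) \/ sig_inf p = None) /\ forall b, p b -> sig_le (sig_inf p) b.
Proof.
move=> psize; apply: (epsilon_spec (inhabits None)
  (fun a => (p a \/ a = None) /\ forall b, p b -> sig_le a b)).
case: (sig_least (n := n) (p := fun a => p a \/ a = None)) => [a [/psize|->]//||a [pa amin]].
- by exists None; right.
- by exists a; split=> // b pb; apply: amin; left.
Qed.

Lemma sig_inf_size n p : (forall a, p a -> sig_size n a) -> sig_size n (sig_inf p).
Proof. by move=> psize; case: (sig_infP psize) => -[/psize|->]. Qed.
End Signatures.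

Definition child (d : nat) (t : tree) : tree := fun u => t (d :: u).
Definition sub (t : tree) (v : seq nat) : tree := fun u => t (v ++ u).

Definition sim_free (t : tree) (v : seq nat) :=
  forall m, m < size v -> ~~ is_sim (t (take m v)).

Definition consistent (P : player) (t : tree) (s : seq nat -> nat) (v : seq nat) :=
  forall m, m < size v -> controlled t P (take m v) -> nth 0 v m = s (take m v).

Lemma child_sub t v d : child d (sub t v) = sub t (rcons v d).
Proof. by apply: functional_extensionality => u; rewrite /child /sub cat_rcons. Qed.

Lemma take_rcons_le (v : seq nat) d m : m <= size v -> take m (rcons v d) = take m v.
Proof. by move=> mv; rewrite -cats1 takel_cat. Qed.

Lemma prefD b m n : pref b (m + n) = pref b m ++ pref (fun l => b (m + l)) n.
Proof.
rewrite /pref iotaD map_cat add0n; congr (_ ++ _).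
by rewrite -[in LHS](addn0 m) iotaDl -map_comp.
Qed.

Lemma pref_nth (b : nat -> nat) v n : n <= size v ->
  (forall m, m < size v -> b m = nth 0 v m) -> pref b n = take n v.
Proof.
move=> nv bv; rewrite -[in RHS](mkseq_nth 0 v) /mkseq -map_take take_iota (minn_idPl nv).
by apply/eq_in_map => m; rewrite mem_iota add0n => /andP[_ mn]; apply/bv/(leq_trans mn).
Qed.

Lemma controlled_nil t P : controlled t P [::] = is_c P (t [::]).
Proof. by rewrite /controlled /= orbF. Qed.

Lemma switched_take t w n : sim_free t w -> n <= size w -> switched t (take n w) = false.
Proof.
move=> sf nw; rewrite /switched size_take_min (minn_idPl nw).
suff -> : count (fun m => is_sim (t (take m (take n w)))) (iota 0 n) = 0 by [].
apply/eqP; rewrite -leqn0 leqNgt -has_count; apply/hasPn => m.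
rewrite mem_iota add0n => /andP[_ mn]; rewrite take_takel ?(ltnW mn) //.
exact/sf/(leq_trans mn).
Qed.

Lemma switched_sub t v u : sim_free t v -> switched t (v ++ u) = switched (sub t v) u.
Proof.
move=> sf; rewrite /switched size_cat iotaD count_cat.
have -> : count (fun m => is_sim (t (take m (v ++ u)))) (iota 0 (size v)) = 0.
  apply/eqP; rewrite -leqn0 leqNgt -has_count; apply/hasPn => m.
  by rewrite mem_iota add0n => /andP[_ mv]; rewrite take_cat mv; apply: sf.
rewrite add0n -[X in iota X _]addn0 iotaDl count_map.
by congr (odd _); apply: eq_count => m /=; rewrite /sub take_cat ltnNge leq_addr /= addKn.
Qed.

Lemma controlled_sub t P v u : sim_free t v ->
  controlled t P (v ++ u) = controlled (sub t v) P u.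
Proof. by move=> sf; rewrite /controlled switched_sub. Qed.

Lemma eventually_shift (f : nat -> Prop) m :
  (exists N, forall n, N <= n -> f n) <-> (exists N, forall n, N <= n -> f (m + n)).
Proof.
split=> [[N fN]|[N fN]].
  by exists N => n Nn; apply/fN/(leq_trans Nn (leq_addl _ _)).
exists (m + N) => n Nn; have mn : m <= n by apply: leq_trans (leq_addr _ _) Nn.
by rewrite -(subnKC mn); apply: fN; rewrite leq_subRL // addnC.
Qed.

Lemma often_shift (f : nat -> Prop) m :
  (forall N, exists2 n, N <= n & f n) <-> (forall N, exists2 n, N <= n & f (m + n)).
Proof.
split=> fN N.
  case: (fN (m + N)) => n Nn fn; have mn : m <= n by apply: leq_trans (leq_addr _ _) Nn.
  by exists (n - m); rewrite ?subnKC // leq_subRL // addnC.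
by case: (fN N) => n Nn fn; exists (m + n) => //; apply: leq_trans Nn (leq_addl _ _).
Qed.

Lemma branch_won_sub k P t v b : sim_free t v -> pref b (size v) = v ->
  branch_won k P t b <-> branch_won k P (sub t v) (fun n => b (size v + n)).
Proof.
move=> sf bv; set b' := fun n => b (size v + n).
have prefE n : pref b (size v + n) = v ++ pref b' n by rewrite prefD bv.
have oftenE j : inf_often t b j <-> inf_often (sub t v) b' j.
  rewrite /inf_often (often_shift _ (size v)).
  by split=> fN N; case: (fN N) => n Nn tn; exists n; rewrite // ?prefE in tn *.
have leastE j : least_inf k t b j <-> least_inf k (sub t v) b' j.
  rewrite /least_inf; split=> [[[/oftenE jo jmin]|[no ->]]|[[/oftenE jo jmin]|[no ->]]].
  - by left; split=> // j' lt /oftenE; apply: jmin.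
  - by right; split=> // j' /oftenE; apply: no.
  - by left; split=> // j' lt /oftenE; apply: jmin.
  - by right; split=> // j' /oftenE; apply: no.
have swE (f : bool -> bool) : (exists N, forall n, N <= n -> f (switched t (pref b n))) <->
    (exists N, forall n, N <= n -> f (switched (sub t v) (pref b' n))).
  rewrite (eventually_shift _ (size v)).
  by split=> -[N fN]; exists N => n Nn; move: (fN n Nn); rewrite prefE switched_sub.
have keptE := swE negb; have switchedE := swE id.
split=> -[j [/leastE jl won]]; exists j; split=> //.
  by case: won => [[/keptE ? ?]|[/switchedE ? ?]]; [left|right].
by case: won => [[/keptE ? ?]|[/switchedE ? ?]]; [left|right].
Qed.

Section Strategies.
Variables (k : nat) (P : player).

Definition winning_strategy (t : tree) (s : seq nat -> nat) :=
  (forall u, controlled t P u -> s u < 2) /\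
  forall b, is_branch t b ->
    (forall n, controlled t P (pref b n) -> b n = s (pref b n)) ->
    branch_won k P t b.

Lemma winning_strategy_sub t s v : winning_strategy t s -> sim_free t v ->
  consistent P t s v -> (forall m, m <= size v -> t (take m v) <> None) ->
  winning_strategy (sub t v) (fun u => s (v ++ u)).
Proof.
move=> [s2 swin] sf cv tv; split=> [u|b' b'br b'cons].
  by rewrite -controlled_sub //; apply: s2.
pose b n := if n < size v then nth 0 v n else b' (n - size v).
have bv m : m < size v -> b m = nth 0 v m by rewrite /b => ->.
have b'E : (fun n => b (size v + n)) = b'.
  by apply: functional_extensionality => n; rewrite /b ltnNge leq_addr /= addKn.
have prefv : pref b (size v) = v by rewrite (pref_nth (leqnn _) bv) take_size.
have prefE n : pref b (size v + n) = v ++ pref b' n by rewrite prefD prefv b'E.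
have tailE n : size v <= n -> n = size v + (n - size v) by move=> vn; rewrite subnKC.
rewrite -b'E -branch_won_sub //; apply: swin => n.
  case: (leqP n (size v)) => nv; first by rewrite (pref_nth nv bv); apply: tv.
  by rewrite (tailE _ (ltnW nv)) prefE; apply: b'br.
case: (ltnP n (size v)) => nv; first by rewrite (pref_nth (ltnW nv) bv) bv //; apply: cv.
rewrite (tailE _ nv) prefE controlled_sub // => /b'cons <-.
by rewrite /b ltnNge leq_addr /= addKn.
Qed.

Lemma winning_strategy_root t (d0 : nat) (S : nat -> seq nat -> nat) :
  ~~ is_sim (t [::]) -> (controlled t P [::] -> d0 < 2) ->
  (forall d, t [:: d] <> None -> (controlled t P [::] -> d = d0) ->
     winning_strategy (child d t) (S d)) ->
  winning_strategy t (fun u => if u is d :: u' then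
                                 (if S d u' < 2 then S d u' else 0) else d0).
Proof.
move=> nsim d0lt Swin; split=> [[|d u] c|b br bcons]; first exact: d0lt.
  by case: ifP.
have sf : sim_free t [:: b 0] by case.
have [S2 Sw] : winning_strategy (child (b 0) t) (S (b 0)).
  by apply: Swin; [apply: (br 1)|move=> c; rewrite (bcons 0 c)].
have prefE n : pref b (1 + n) = b 0 :: pref (fun n => b (1 + n)) n by rewrite prefD.
apply/(branch_won_sub _ _ sf (erefl : pref b 1 = [:: b 0])); apply: Sw => n.
  by have := br (1 + n); rewrite prefE.
move=> c; have := bcons (1 + n); rewrite prefE.
by rewrite -[_ :: _]/([:: b 0] ++ _) controlled_sub // => /(_ c) ->; rewrite (S2 _ c).
Qed.
End Strategies.

Section Trees.
Variables (i k : nat).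
Implicit Types t : tree.

Lemma tree_prefix t w x : is_tree i k t -> t (w ++ x) <> None -> t w <> None.
Proof.
move=> [_ [tpre _]]; elim/last_ind: x => [|x n IH]; first by rewrite cats0.
by rewrite -rcons_cat => /tpre.
Qed.

Lemma tree_take t v m : is_tree i k t -> t v <> None -> t (take m v) <> None.
Proof. by move=> tt tv; apply: (tree_prefix (x := drop m v) tt); rewrite cat_take_drop. Qed.

Lemma tree_root_child t a d : is_tree i k t -> t [::] = Some a ->
  (t [:: d] <> None <-> d < arity a).
Proof. by move=> [_ [_ lab]] /lab [ch _]; apply: ch. Qed.

Lemma tree_beyond_arity t a d u : is_tree i k t -> t [::] = Some a -> arity a <= d ->
  t (d :: u) = None.
Proof.
move=> tt ta ad; case E: (t (d :: u)) => // [x].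
suff: t [:: d] <> None by move/(tree_root_child _ tt ta); rewrite ltnNge ad.
by apply: (tree_prefix (x := u) tt); rewrite /= E.
Qed.

Lemma tree_unE t a : is_tree i k t -> t [::] = Some a -> arity a = 1 ->
  t = un a (child 0 t).
Proof.
move=> tt ta a1; apply: functional_extensionality => -[|[|d] u] //=.
by rewrite (tree_beyond_arity _ tt ta) // a1.
Qed.

Lemma tree_binE t a : is_tree i k t -> t [::] = Some a -> arity a = 2 ->
  t = bin a (child 0 t) (child 1 t).
Proof.
move=> tt ta a2; apply: functional_extensionality => -[|[|[|d]] u] //=.
by rewrite (tree_beyond_arity _ tt ta) // a2.
Qed.

Lemma is_tree_child t d : is_tree i k t -> t [:: d] <> None -> is_tree i k (child d t).
Proof.
move=> [root [tpre lab]] td; split=> //; split=> [u n|u a /lab //].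
by rewrite /child -rcons_cons; apply: tpre.
Qed.

Lemma well_formed_child t d : well_formed i k t -> t [:: d] <> None ->
  well_formed i k (child d t).
Proof.
move=> [tt wf] td; split; first exact: is_tree_child.
move=> b' b'br; pose b n := if n is n'.+1 then b' n' else d.
have prefE n : pref b n.+1 = d :: pref b' n by rewrite -add1n prefD.
case: (wf b) => [[|n]|N sN]; [by case: tt|by rewrite prefE; apply: b'br|].
by exists N => n Nn; rewrite /child -prefE; apply/sN/(leq_trans Nn).
Qed.
End Trees.

Section Games.
Variables (k : nat) (P : player).

Lemma wins_un a t : ~~ is_sim (Some a) -> ~~ is_c P (Some a) -> wins k P t ->
  wins k P (un a t).
Proof.
move=> nsim nc [s sw]; eexists.
by apply: (winning_strategy_root (d0 := 0) (S := fun _ => s)) => // -[|d].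
Qed.

Lemma wins_bin_own tL tR : wins k P tL \/ wins k P tR -> wins k P (bin (cl P) tL tR).
Proof.
have c : controlled (bin (cl P) tL tR) P [::] by rewrite controlled_nil; case: P.
case=> -[s sw]; eexists.
- by apply: (winning_strategy_root (d0 := 0) (S := fun _ => s)) => [|//|d _ /(_ c) -> //];
    case: P.
- by apply: (winning_strategy_root (d0 := 1) (S := fun _ => s)) => [|//|d _ /(_ c) -> //];
    case: P.
Qed.

Lemma wins_bin_opp tL tR : wins k P tL -> wins k P tR -> wins k P (bin (cl (opp P)) tL tR).
Proof.
move=> [sL swL] [sR swR].
have nc : controlled (bin (cl (opp P)) tL tR) P [::] = false.
  by rewrite controlled_nil; case: P.
eexists; apply: (winning_strategy_root (d0 := 0) (S := fun d => if d is 0 then sL else sR)).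
- by case: P.
- by rewrite nc.
by move=> [|[|d]] //= tn; case: tn.
Qed.

Lemma wins_child i t d : is_tree i k t -> wins k P t -> ~~ is_sim (t [::]) ->
  ~~ controlled t P [::] -> t [:: d] <> None -> wins k P (child d t).
Proof.
move=> tt [s sw] nsim nc td; exists (fun u => s (d :: u)).
apply: (winning_strategy_sub (v := [:: d]) sw); first by case.
  by case=> // _; rewrite take0 (negbTE nc).
by case=> [|[]] // _; case: tt.
Qed.
End Games.

Section Rank.
Variables (O : Omega1) (A : countType) (R : A -> A -> Prop).
Hypothesis wfR : well_founded R.

Definition rank_bound a (rec : forall b, R b a -> O) (x : O) :=
  forall b (Rba : R b a), olt (rec b Rba) x.

Lemma rank_bound_least a (rec : forall b, R b a -> O) :
  exists x, rank_bound rec x /\ forall y, rank_bound rec y -> ~ olt y x.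
Proof.
apply: olt_least.
pose f b := if excluded_middle_informative (R b a) is left Rba then rec b Rba else ozero O.
case: (olt_ub f) => x fx; exists x => b Rba; have := fx b.
by rewrite /f; case: excluded_middle_informative => // Rba'; rewrite (proof_irrelevance _ Rba Rba').
Qed.

Definition rank : A -> O := Fix wfR (fun _ => O)
  (fun a rec => sval (constructive_indefinite_description _ (rank_bound_least rec))).

Lemma rank_spec a : rank_bound (fun b (_ : R b a) => rank b) (rank a) /\
  forall y, rank_bound (fun b (_ : R b a) => rank b) y -> ~ olt y (rank a).
Proof.
rewrite /rank Fix_eq; first by case: constructive_indefinite_description.
move=> a' f g fg; have -> // : f = g.
by apply: functional_extensionality_dep => b; apply: functional_extensionality_dep.
Qed.

Lemma rank_lt a b : R b a -> olt (rank b) (rank a).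
Proof. exact: (rank_spec a).1 b. Qed.

Lemma rank_le a a' : (forall b, R b a -> R b a') -> ole (rank a) (rank a').
Proof.
by move=> RR; apply/nolt_ole/(rank_spec a).2 => b /RR; apply: rank_lt.
Qed.
End Rank.

Lemma wf_of_no_descending_chain (A : Type) (R : A -> A -> Prop) :
  (forall c : nat -> A, ~ (forall n, R (c n.+1) (c n))) -> well_founded R.
Proof.
move=> nochain a; apply: NNPP => na.
have step (x : {a | ~ Acc R a}) : {y : {a | ~ Acc R a} | R (sval y) (sval x)}.
  apply: constructive_indefinite_description; case: x => x nx.
  have [y [Ryx ny]] : exists y, R y x /\ ~ Acc R y.
    apply: NNPP => nex; apply: nx; constructor => y Ryx; apply: NNPP => ny.
    by apply: nex; exists y.
  by exists (exist _ y ny).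
pose c n := sval (iter n (fun x => sval (step x)) (exist _ a na)).
by apply: (nochain c) => n; apply: svalP (step _).
Qed.

Lemma chain_branch (c : nat -> seq nat) :
  (forall n, exists2 u, c n.+1 = c n ++ u & 0 < size u) ->
  (forall n, n <= size (c n)) /\
  exists b, forall n m, m < size (c n) -> b m = nth 0 (c n) m.
Proof.
move=> grow.
have cpre n m : n <= m -> exists u, c m = c n ++ u.
  elim: m => [|m IH]; first by rewrite leqn0 => /eqP ->; exists [::]; rewrite cats0.
  rewrite leq_eqVlt => /orP[/eqP <-|/IH[u cmE]]; first by exists [::]; rewrite cats0.
  by case: (grow m) => u' -> _; exists (u ++ u'); rewrite cmE catA.
have csize n : n <= size (c n).
  elim: n => // n IH; case: (grow n) => u -> u0.
  by rewrite size_cat -addn1 leq_add.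
split=> //; exists (fun m => nth 0 (c m.+1) m) => n m mn.
case: (cpre n (maxn n m.+1) (leq_maxl _ _)) => u1 e1.
case: (cpre m.+1 (maxn n m.+1) (leq_maxr _ _)) => u2 e2.
have := congr1 (nth 0 ^~ m) e1; rewrite e2 !nth_cat mn.
by rewrite (leq_trans (ltnSn m) (csize m.+1)).
Qed.

Lemma least_inf_unique k t b j j' : least_inf k t b j -> least_inf k t b j' -> j = j'.
Proof.
case=> [[jo jmin]|[none ->]] [[jo' jmin']|[none' ->]] //.
- by case: (ltngtP j j') => // [/jmin'|/jmin].
- by case: (none' j).
- by case: (none j').
Qed.

Lemma least_inf_lb k t b j : inf_often t b j ->
  (exists N, forall n j', N <= n -> t (pref b n) = Some (Pr j') -> j <= j') ->
  least_inf k t b j.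
Proof.
move=> jo [N lb]; left; split=> // j' j'j /(_ N) [n Nn /(lb _ _ Nn)].
by rewrite leqNgt j'j.
Qed.

Lemma kept_play_winning k P t s b j : winning_strategy k P t s -> is_branch t b ->
  (forall n, controlled t P (pref b n) -> b n = s (pref b n)) ->
  (forall n, ~~ switched t (pref b n)) -> least_inf k t b j -> p_winning P j.
Proof.
move=> [_ sw] br bcons kept jl.
case: (sw b br bcons) => j0 [j0l [[_ j0w]|[[N sN] _]]].
  by rewrite (least_inf_unique jl j0l).
by move: (kept N); rewrite sN.
Qed.

Section Descents.
Variables (i k : nat) (P : player) (t : tree) (s : seq nat -> nat).

Definition on_play v := [/\ t v <> None, sim_free t v & consistent P t s v].

Definition descent (j : nat) (w v : seq nat) :=
  [/\ p_losing P j, on_play v, on_play w &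
   exists2 u, w = v ++ u &
     (forall m j', m < size u -> t (v ++ take m u) = Some (Pr j') -> j <= j') /\
     exists2 m, m < size u & t (v ++ take m u) = Some (Pr j)].

(* An infinite descending chain of [j]-descents would be a kept play consistent
   with [s] whose least infinitely frequent priority is the [P]-losing [j]. *)
Lemma descent_wf j : is_tree i k t -> winning_strategy k P t s -> well_founded (descent j).
Proof.
move=> tt sw; apply: wf_of_no_descending_chain => c cdesc.
have jl : p_losing P j by case: (cdesc 0).
have cplay n : on_play (c n) by case: (cdesc n).
have [csize [b bc]] : (forall n, n <= size (c n)) /\
    exists b, forall n m, m < size (c n) -> b m = nth 0 (c n) m.
  by apply: chain_branch => n; case: (cdesc n) => _ _ _ [u -> [_ [m mu _]]]; exists u;
    last apply: leq_ltn_trans mu.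
have prefc q p : p <= size (c q) -> pref b p = take p (c q).
  by move=> pq; apply: pref_nth pq (bc q).
have br : is_branch t b.
  by move=> n; rewrite (prefc n n (csize n)); case: (cplay n) => cn _ _; apply: tree_take tt cn.
have bcons n : controlled t P (pref b n) -> b n = s (pref b n).
  have nc : n < size (c n.+1) by apply: csize.
  rewrite (prefc _ _ (ltnW nc)) (bc _ _ nc); case: (cplay n.+1) => _ _; exact.
have kept n : ~~ switched t (pref b n).
  by rewrite (prefc n n (csize n)); case: (cplay n) => _ sf _; rewrite switched_take.
have lb q n j' : size (c 0) <= n < size (c q) -> t (pref b n) = Some (Pr j') -> j <= j'.
  elim: q n => [|q IH] n /andP[n0 nq]; first by move: (leq_ltn_trans n0 nq); rewrite ltnn.
  case: (ltnP n (size (c q))) => [nq'|qn]; first by apply: IH; rewrite n0.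
  case: (cdesc q) => _ _ _ [u cE [ulb _]].
  rewrite (prefc q.+1 n (ltnW nq)) cE take_cat ltnNge qn /= => tn.
  by apply: (ulb (n - size (c q))); rewrite // ltn_subLR // -size_cat -cE.
have jo : inf_often t b j.
  move=> N; case: (cdesc N) => _ _ _ [u cE [_ [m mu tm]]].
  exists (size (c N) + m); first exact: leq_trans (csize N) (leq_addr _ _).
  rewrite (prefc N.+1); last by rewrite cE size_cat leq_add2l ltnW.
  by rewrite cE take_cat ltnNge leq_addr /= addKn.
have jw : p_winning P j.
  apply: (kept_play_winning sw br bcons kept); apply: (least_inf_lb _ jo).
  by exists (size (c 0)) => n j' n0; apply: (lb n.+1); rewrite n0 csize.
by move: jl; rewrite /p_losing jw.
Qed.
End Descents.

Section Operator.
Variables (i k : nat) (O : Omega1) (P : player).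
Local Notation Lidx := (losing_idx i k P).
Implicit Types (a b c : sig O) (sg : tree -> sig O).

Definition sig_fit a := sig_size (size Lidx) a.

(* One numbering serves both rules (3) and (4): the indices in [Lidx] are
   [P]-losing, so [p.1 == j] only fires for a [P]-losing [j]. *)
Definition sig_step j (th : seq O) : seq O :=
  [seq (if p.1 < j then p.2 else if p.1 == j then osucc p.2 else ozero O) | p <- zip Lidx th].

Lemma size_sig_step j th : size th = size Lidx -> size (sig_step j th) = size Lidx.
Proof. by move=> e; rewrite size_map size_zip e minnn. Qed.

Lemma sig_step_winning j th : p_winning P j ->
  sig_step j th = [seq (if p.1 < j then p.2 else ozero O) | p <- zip Lidx th].
Proof.
move=> jw; have : j \notin Lidx by rewrite mem_filter /p_losing jw.
rewrite /sig_step; elim: Lidx th => [|l ls IH] [|x th] //=.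
by rewrite inE negb_or eq_sym => /andP[/negbTE -> /IH ->].
Qed.

Lemma sig_step_mono j s t : size s = size Lidx -> size t = size Lidx ->
  lex_le s t -> lex_le (sig_step j s) (sig_step j t).
Proof.
move=> es et st.
apply: (@lex_map_zip_mono O (fun l x => if l < j then x else if l == j then osucc x else ozero O))
  es et st; last by apply: sorted_filter; [apply: ltn_trans|apply: iota_ltn_sorted].
move=> l; case: (ltngtP l j) => lj; [by left| |by left => x y; apply: osucc_mono].
right=> l' ll' x; have jl' := leq_trans lj ll'.
by rewrite ltnNge (ltnW jl') (gtn_eqF jl').
Qed.

Definition smin a b := if excluded_middle_informative (sig_le a b) then a else b.
Definition smax a b := if excluded_middle_informative (sig_le a b) then b else a.

Lemma smin_fit a b : sig_fit a -> sig_fit b -> sig_fit (smin a b).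
Proof. by rewrite /smin; case: excluded_middle_informative. Qed.

Lemma smax_fit a b : sig_fit a -> sig_fit b -> sig_fit (smax a b).
Proof. by rewrite /smax; case: excluded_middle_informative. Qed.

Lemma smin_le a b c : sig_fit a -> sig_fit b -> sig_le a c \/ sig_le b c ->
  sig_le (smin a b) c.
Proof.
move=> fa fb ac_bc; rewrite /smin; case: excluded_middle_informative => ab.
  by case: ac_bc => // /(sig_le_trans ab).
case: ac_bc => // ac; case: (sig_le_total fa fb) => // ba.
exact: sig_le_trans ba ac.
Qed.

Lemma smax_le a b c : sig_le a c -> sig_le b c -> sig_le (smax a b) c.
Proof. by rewrite /smax; case: excluded_middle_informative. Qed.

Lemma le_smax a b : sig_fit a -> sig_fit b -> sig_le a (smax a b) /\ sig_le b (smax a b).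
Proof.
move=> fa fb; rewrite /smax; case: excluded_middle_informative => ab.
  by split=> //; apply: sig_le_refl.
by split; [apply: sig_le_refl|case: (sig_le_total fa fb)].
Qed.

Lemma smin_mono a b a' b' : sig_fit a -> sig_fit b ->
  sig_le a a' -> sig_le b b' -> sig_le (smin a b) (smin a' b').
Proof.
move=> fa fb aa' bb'; rewrite [smin a' b']/smin.
by case: excluded_middle_informative => a'b'; apply: smin_le => //; [left|right].
Qed.

Lemma smax_mono a b a' b' : sig_fit a' -> sig_fit b' ->
  sig_le a a' -> sig_le b b' -> sig_le (smax a b) (smax a' b').
Proof.
move=> fa' fb' aa' bb'; have [a'm b'm] := le_smax fa' fb'.
by apply: smax_le; [apply: sig_le_trans a'm|apply: sig_le_trans b'm].
Qed.

Lemma smin_min a b : sig_fit a -> sig_fit b -> sig_min a b (smin a b).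
Proof.
move=> fa fb; rewrite /smin; case: excluded_middle_informative => ab; first by left.
by right; split=> //; case: (sig_le_total fa fb).
Qed.

Lemma smax_max a b : sig_fit a -> sig_fit b -> sig_max a b (smax a b).
Proof.
move=> fa fb; rewrite /smax; case: excluded_middle_informative => ab; first by left.
by right; split=> //; case: (sig_le_total fa fb).
Qed.

Lemma smin_le_min a b c : sig_min a b c -> sig_le (smin a b) c.
Proof.
by rewrite /smin; case: excluded_middle_informative => ab [[_ ->]|[_ ->]] //; apply: sig_le_refl.
Qed.

Lemma smax_le_max a b c : sig_max a b c -> sig_le (smax a b) c.
Proof.
by rewrite /smax; case: excluded_middle_informative => ab [[_ ->]|[_ ->]] //; apply: sig_le_refl.
Qed.

Definition sig_local sg (t : tree) : sig O :=
  match t [::] with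
  | Some (Pr j) => omap (sig_step j) (sg (child 0 t))
  | Some Sim => Some (nseq (size Lidx) (ozero O))
  | Some a => if is_c P (Some a) then smin (sg (child 0 t)) (sg (child 1 t))
              else smax (sg (child 0 t)) (sg (child 1 t))
  | None => None
  end.

Definition sig_op sg (t : tree) : sig O :=
  if excluded_middle_informative (wins k P t) then sig_local sg t else None.

Definition prefixed sg := forall t, sig_fit (sg t) /\ sig_le (sig_op sg t) (sg t).

Lemma sig_local_fit sg t : (forall t, sig_fit (sg t)) -> sig_fit (sig_local sg t).
Proof.
move=> fsg; rewrite /sig_local; case: (t [::]) => // -[j| | |] /=.
- by have := fsg (child 0 t); case: (sg _) => //= th; apply: size_sig_step.
- by rewrite /sig_fit /= size_nseq.
- by case: ifP => _; [apply: smin_fit|apply: smax_fit].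
- by case: ifP => _; [apply: smin_fit|apply: smax_fit].
Qed.

Lemma sig_op_fit sg t : (forall t, sig_fit (sg t)) -> sig_fit (sig_op sg t).
Proof.
by move=> fsg; rewrite /sig_op; case: excluded_middle_informative => // w; apply: sig_local_fit.
Qed.

Lemma sig_local_mono sg sg' t : (forall t, sig_fit (sg t)) -> (forall t, sig_fit (sg' t)) ->
  (forall t, sig_le (sg t) (sg' t)) -> sig_le (sig_local sg t) (sig_local sg' t).
Proof.
move=> fsg fsg' le; rewrite /sig_local; case: (t [::]) => // -[j| | |].
- have := le (child 0 t); have := fsg (child 0 t); have := fsg' (child 0 t).
  by case: (sg _) => [a|]; case: (sg' _) => [b|] //= fb fa; apply: sig_step_mono.
- exact: sig_le_refl.
- by case: ifP => _; [apply: smin_mono|apply: smax_mono].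
- by case: ifP => _; [apply: smin_mono|apply: smax_mono].
Qed.

Lemma sig_op_mono sg sg' t : (forall t, sig_fit (sg t)) -> (forall t, sig_fit (sg' t)) ->
  (forall t, sig_le (sg t) (sg' t)) -> sig_le (sig_op sg t) (sig_op sg' t).
Proof.
by move=> *; rewrite /sig_op; case: excluded_middle_informative => // w; apply: sig_local_mono.
Qed.

Definition sig_lfp (t : tree) : sig O := sig_inf (fun a => exists2 sg, prefixed sg & sg t = a).

Lemma sig_lfpP t : (exists2 sg, prefixed sg & sg t = sig_lfp t) /\
  forall sg, prefixed sg -> sig_le (sig_lfp t) (sg t).
Proof.
have pfit a : (exists2 sg, prefixed sg & sg t = a) -> sig_size (size Lidx) a.
  by case=> sg /(_ t) [fsg _] <-.
have [lfp_in lfp_min] := sig_infP pfit; split; last by move=> sg psg; apply: lfp_min; exists sg.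
case: lfp_in => // none; exists (fun _ => None); last by rewrite /sig_lfp none.
by move=> t'; split=> //; case: (sig_op _ t').
Qed.

Lemma sig_lfp_fit t : sig_fit (sig_lfp t).
Proof. by case: (sig_lfpP t) => -[sg /(_ t) [fsg _] <-]. Qed.

Lemma sig_lfp_fix t : sig_lfp t = sig_op sig_lfp t.
Proof.
have op_le t' : sig_le (sig_op sig_lfp t') (sig_lfp t').
  case: (sig_lfpP t') => -[sg psg <-] _.
  apply: sig_le_trans (psg t').2.
  by apply: sig_op_mono sig_lfp_fit (fun t => (psg t).1) (fun t => (sig_lfpP t).2 sg psg).
have op_prefixed : prefixed (sig_op sig_lfp).
  have op_fit t' : sig_fit (sig_op sig_lfp t') by apply: sig_op_fit sig_lfp_fit.
  by move=> t'; split; last apply: sig_op_mono op_fit sig_lfp_fit op_le.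
by apply: sig_le_antisym; [apply: (sig_lfpP t).2|apply: op_le].
Qed.
End Operator.

Section RankSignature.
Variables (i k : nat) (O : Omega1) (P : player).
Local Notation Lidx := (losing_idx i k P).
Variables (t : tree) (s : seq nat -> nat).
Hypotheses (tt : is_tree i k t) (sw : winning_strategy k P t s).
Local Notation on_play := (on_play P t s).
Local Notation descent := (descent P t s).

Definition rank_sig (v : seq nat) : seq O := [seq rank O (descent_wf j tt sw) v | j <- Lidx].

Lemma size_rank_sig v : size (rank_sig v) = size Lidx.
Proof. by rewrite size_map. Qed.

Lemma on_play_controlled v : on_play v -> controlled t P v = is_c P (t v).
Proof.
case=> _ sf _; have := switched_take sf (leqnn (size v)).
by rewrite take_size /controlled => ->; rewrite /= orbF.
Qed.

Lemma on_play_rcons v d : on_play v -> ~~ is_sim (t v) -> (controlled t P v -> d = s v) ->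
  t (rcons v d) <> None -> on_play (rcons v d).
Proof.
move=> [tv sf cv] vsim dc td; split=> //; rewrite /sim_free /consistent size_rcons => m.
  rewrite ltnS leq_eqVlt => /orP[/eqP ->|mv]; first by rewrite -cats1 take_size_cat.
  by rewrite take_rcons_le ?(ltnW mv) //; apply: sf.
rewrite ltnS leq_eqVlt => /orP[/eqP ->|mv].
  by rewrite -cats1 take_size_cat // nth_cat ltnn subnn.
by rewrite take_rcons_le ?(ltnW mv) // nth_rcons mv; apply: cv.
Qed.

Lemma descent_rcons j v d w : on_play v -> (forall j', t v = Some (Pr j') -> j <= j') ->
  descent j w (rcons v d) -> descent j w v.
Proof.
move=> pv vj [jl _ pw [u wE [ulb [m mu tm]]]]; split=> //.
exists (d :: u); first by rewrite wE cat_rcons.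
split=> [[|m'] j' /=|]; first by rewrite cats0 => _; apply: vj.
  by rewrite ltnS -cat_rcons; apply: ulb.
by exists m.+1; rewrite //= -cat_rcons.
Qed.

Lemma descent_rcons_prio j v d : on_play v -> on_play (rcons v d) ->
  t v = Some (Pr j) -> p_losing P j -> descent j (rcons v d) v.
Proof.
move=> pv pvd tv jl; split=> //; exists [:: d]; first by rewrite cats1.
split; last by exists 0; rewrite //= cats0.
by case=> [|m] j' // _; rewrite /= cats0 tv => -[->].
Qed.

Lemma zip_rank_sig v :
  zip Lidx (rank_sig v) = [seq (l, rank O (descent_wf l tt sw) v) | l <- Lidx].
Proof. by rewrite -[X in zip X _]map_id zip_map. Qed.

Lemma rank_sig_rcons v d : on_play v -> (forall j, t v <> Some (Pr j)) ->
  lex_le (rank_sig (rcons v d)) (rank_sig v).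
Proof.
move=> pv vnp; apply/lex_of_pointwise/pointwise_le_map => j _.
by apply: rank_le => w; apply: descent_rcons => // j' /vnp.
Qed.

Lemma rank_sig_rcons_prio v j : on_play v -> on_play (rcons v 0) -> t v = Some (Pr j) ->
  lex_le (sig_step i k P j (rank_sig (rcons v 0))) (rank_sig v).
Proof.
move=> pv pv0 tv; rewrite /sig_step zip_rank_sig -map_comp.
apply/lex_of_pointwise/pointwise_le_map => l; rewrite mem_filter => /andP[ll _] /=.
case: (ltngtP l j) => lj.
- by apply: rank_le => w; apply: descent_rcons => // j'; rewrite tv => -[<-]; apply: ltnW.
- exact: ozero_ole.
- by rewrite -lj in tv; apply/osucc_ole/rank_lt/descent_rcons_prio.
Qed.

Lemma sig_local_rank_le (sg : tree -> sig O) v : (forall t', sig_fit i k P (sg t')) ->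
  on_play v ->
  (forall d, on_play (rcons v d) ->
     sig_le (sg (sub t (rcons v d))) (Some (rank_sig (rcons v d)))) ->
  sig_le (sig_local i k P sg (sub t v)) (Some (rank_sig v)).
Proof.
move=> fsg pv sgle; have [tv _ _] := pv; have lab := tt.2.2.
have binary a : t v = Some a -> a = C1 \/ a = C2 ->
    sig_le (if is_c P (Some a) then smin (sg (sub t (rcons v 0))) (sg (sub t (rcons v 1)))
            else smax (sg (sub t (rcons v 0))) (sg (sub t (rcons v 1)))) (Some (rank_sig v)).
  move=> ta aC; rewrite -ta -(on_play_controlled pv).
  have [a2 vsim vnp] : [/\ arity a = 2, ~~ is_sim (t v) & forall j, t v <> Some (Pr j)].
    by rewrite ta; case: aC => ->.
  have child_le d : d < 2 -> (controlled t P v -> d = s v) ->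
      sig_le (sg (sub t (rcons v d))) (Some (rank_sig v)).
    move=> d2 dc; have pvd : on_play (rcons v d).
      by apply: on_play_rcons => //; apply/((lab v _ ta).1 d); rewrite a2.
    by apply: sig_le_trans (sgle d pvd) _; apply: rank_sig_rcons.
  case: ifP => c; last by apply: smax_le; apply: child_le => //; rewrite c.
  have sv2 : s v < 2 by apply: sw.1; rewrite c.
  apply: smin_le; try exact: fsg.
  by case: (s v) sv2 (child_le (s v) sv2 (fun _ => erefl)) => [|[|]] // _ le; [left|right].
rewrite /sig_local !child_sub (_ : sub t v [::] = t v); last by rewrite /sub cats0.
case tvE: (t v) => [[j| | |]|] //.
- have pv0 : on_play (rcons v 0).
    apply: on_play_rcons; rewrite ?tvE //; last by apply/((lab v _ tvE).1 0).
    by rewrite (on_play_controlled pv) tvE; case: P.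
  have := sgle 0 pv0; have := fsg (sub t (rcons v 0)); case: (sg _) => [th0|] //= fth0 le0.
  exact: lex_trans (sig_step_mono j fth0 (size_rank_sig _) le0) (rank_sig_rcons_prio pv pv0 tvE).
- by rewrite -(size_rank_sig v); apply/lex_of_pointwise/pointwise_nseq_ozero.
- by apply: (binary _ tvE); left.
- by apply: (binary _ tvE); right.
Qed.
End RankSignature.

Section Construction.
Variables (i k : nat) (O : Omega1) (P : player).
Local Notation Lidx := (losing_idx i k P).
Local Notation sig_fit := (sig_fit i k P).
Local Notation sig_lfp := (sig_lfp i k O P).

Definition rank_witness (t' : tree) (a : sig O) :=
  exists t s (tt : is_tree i k t) (sw : winning_strategy k P t s) v,
    [/\ on_play P t s v, sub t v = t' & a = Some (rank_sig O tt sw v)].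

Definition sig_rank (t' : tree) : sig O := sig_inf (rank_witness t').

Lemma rank_witness_fit t' a : rank_witness t' a -> sig_fit a.
Proof. by case=> t [s [tt [sw [v [_ _ ->]]]]]; apply: size_rank_sig. Qed.

Lemma sig_rank_fit t' : sig_fit (sig_rank t').
Proof. exact/sig_inf_size/rank_witness_fit. Qed.

Lemma sig_rank_le t' a : rank_witness t' a -> sig_le (sig_rank t') a.
Proof. exact: (sig_infP (@rank_witness_fit t')).2. Qed.

Lemma sig_rank_prefixed : prefixed i k P sig_rank.
Proof.
move=> t'; split; first exact: sig_rank_fit.
case: (sig_infP (@rank_witness_fit t')) => -[wit|none] _; last first.
  by rewrite /sig_rank none; case: (sig_op _ _ _ _ _).
case: wit => t [s [tt [sw [v [pv <- rankE]]]]]; rewrite /sig_rank rankE.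
have [tv sf cv] := pv.
have wv : wins k P (sub t v).
  exists (fun u => s (v ++ u)); apply: winning_strategy_sub => // m _.
  exact: tree_take tt tv.
rewrite /sig_op; case: excluded_middle_informative => // w.
apply: sig_local_rank_le => // [t''|d pvd]; first exact: sig_rank_fit.
by apply: sig_rank_le; exists t, s, tt, sw, (rcons v d).
Qed.

Lemma sig_rank_finite t : is_tree i k t -> wins k P t -> sig_rank t <> None.
Proof.
move=> tt [s sw]; have : rank_witness t (Some (rank_sig O tt sw [::])).
  by exists t, s, tt, sw, [::]; split=> //; split=> //; case: tt.
by move/sig_rank_le; case: (sig_rank t).
Qed.

Lemma sig_lfp_wins t : sig_lfp t <> None -> wins k P t.
Proof. by rewrite sig_lfp_fix /sig_op; case: excluded_middle_informative. Qed.

Lemma sig_lfp_lose t : ~ wins k P t -> sig_lfp t = None.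
Proof. by move=> nw; apply: NNPP => /sig_lfp_wins. Qed.

Lemma sig_lfp_None t : is_tree i k t -> sig_lfp t = None <-> ~ wins k P t.
Proof.
move=> tt; split=> [none w|]; last exact: sig_lfp_lose.
have := (sig_lfpP i k O P t).2 _ sig_rank_prefixed; rewrite none.
by case E: (sig_rank t) => // _; apply: sig_rank_finite tt w E.
Qed.

Lemma sig_lfp_sim t : wins k P (un Sim t) -> sig_lfp (un Sim t) = Some (nseq (size Lidx) (ozero O)).
Proof. by rewrite sig_lfp_fix /sig_op; case: excluded_middle_informative. Qed.

Lemma sig_lfp_prio t j th : sig_lfp t = Some th ->
  sig_lfp (un (Pr j) t) = Some (sig_step i k P j th).
Proof.
move=> tE; have w : wins k P (un (Pr j) t).
  by apply: wins_un; [|case: P|apply: sig_lfp_wins; rewrite tE].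
rewrite sig_lfp_fix /sig_op; case: excluded_middle_informative => //= w'.
by rewrite /sig_local /= tE.
Qed.

Lemma sig_lfp_bin_own tL tR : sig_min (sig_lfp tL) (sig_lfp tR) (sig_lfp (bin (cl P) tL tR)).
Proof.
rewrite [sig_lfp (bin _ _ _)]sig_lfp_fix /sig_op; case: excluded_middle_informative => w /=.
  by rewrite /sig_local /=; case: P; apply: smin_min; apply: sig_lfp_fit.
have lL : ~ wins k P tL by move=> wL; apply/w/wins_bin_own; left.
have lR : ~ wins k P tR by move=> wR; apply/w/wins_bin_own; right.
by rewrite !sig_lfp_lose //; left.
Qed.

Lemma sig_lfp_bin_opp tL tR : sig_max (sig_lfp tL) (sig_lfp tR) (sig_lfp (bin (cl (opp P)) tL tR)).
Proof.
rewrite [sig_lfp (bin _ _ _)]sig_lfp_fix /sig_op; case: excluded_middle_informative => w /=.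
  by rewrite /sig_local /=; case: P; apply: smax_max; apply: sig_lfp_fit.
case: (classic (wins k P tL)) => wL.
  have wR : ~ wins k P tR by move=> wR; apply/w/wins_bin_opp.
  by rewrite (sig_lfp_lose wR); left; split=> //; case: (sig_lfp tL).
by rewrite (sig_lfp_lose wL); right; split=> //; case: (sig_lfp tR).
Qed.
End Construction.

Section Minimality.
Variables (i k : nat) (O : Omega1) (sg : player -> tree -> sig O) (P : player).
Hypothesis sg_good : good i k sg.

(* Off well-formed trees, [good] says nothing about [sg]; sending them to [None]
   (the top signature) makes [sg P] a prefixed point everywhere. *)
Definition restrict_wf (f : tree -> sig O) (t : tree) : sig O :=
  if excluded_middle_informative (well_formed i k t) then f t else None.

Lemma restrict_wfE f t : well_formed i k t -> restrict_wf f t = f t.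
Proof. by rewrite /restrict_wf; case: excluded_middle_informative. Qed.

Lemma good_local_le t : well_formed i k t -> wins k P t ->
  sig_le (sig_local i k P (restrict_wf (sg P)) t) (sg P t).
Proof.
have [_ [sgN [sgS [sgW [sgL [sgO sgX]]]]]] := sg_good P.
move=> wt w; have tt := wt.1.
case ta: (t [::]) => [a|]; last by case: tt.
have [lab prio] := tt.2.2 [::] a ta.
have wfc d : d < arity a -> well_formed i k (child d t).
  by move=> da; apply: well_formed_child wt _; apply/lab.
rewrite /sig_local ta; case: a ta lab prio wfc => [j| | |] ta lab prio wfc.
- have wc := wfc 0 isT; rewrite restrict_wfE //.
  have : wins k P (child 0 t).
    apply: (wins_child tt w); rewrite ?controlled_nil ?ta //; last exact/lab.
    by case: P.
  move/sgN: wc => [sgNc _] wc; case cE: (sg P _) => [th|]; last by case: (sgNc cE).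
  rewrite [t in sg P t](tree_unE tt ta erefl) /=; have ij := prio j erefl.
  case: (boolP (p_winning P j)) => jw.
    by rewrite (sgW _ _ _ (wfc 0 isT) ij jw cE) sig_step_winning //; apply: lex_refl.
  by rewrite (sgL _ _ _ (wfc 0 isT) ij jw cE); apply: lex_refl.
- rewrite [t in sg P t](tree_unE tt ta erefl) sgS; [exact: sig_le_refl|exact: wfc|].
  by rewrite -(tree_unE tt ta).
- rewrite [t in sg P t](tree_binE tt ta erefl) !restrict_wfE; try exact: wfc.
  have := sgO _ _ (wfc 0 isT) (wfc 1 isT); have := sgX _ _ (wfc 0 isT) (wfc 1 isT).
  by case: P => /= hmax hmin; [apply: smin_le_min hmin|apply: smax_le_max hmax].
- rewrite [t in sg P t](tree_binE tt ta erefl) !restrict_wfE; try exact: wfc.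
  have := sgO _ _ (wfc 0 isT) (wfc 1 isT); have := sgX _ _ (wfc 0 isT) (wfc 1 isT).
  by case: P => /= hmax hmin; [apply: smax_le_max hmax|apply: smin_le_min hmin].
Qed.

Lemma restrict_wf_prefixed : prefixed i k P (restrict_wf (sg P)).
Proof.
have [sgF [sgN _]] := sg_good P.
move=> t; rewrite [restrict_wf _ t]/restrict_wf.
case: excluded_middle_informative => wt; last by split=> //; case: (sig_op _ _ _ _ _).
split; first exact: sgF.
rewrite /sig_op; case: excluded_middle_informative => w; first exact: good_local_le.
by rewrite (proj2 (sgN t wt) w).
Qed.

Lemma sig_lfp_le_good t : well_formed i k t -> sig_le (sig_lfp i k O P t) (sg P t).
Proof.
move=> wt; rewrite -(restrict_wfE (sg P) wt).
exact: (sig_lfpP i k O P t).2 _ restrict_wf_prefixed.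
Qed.
End Minimality.

Lemma sig_lfp_good i k O : good i k (fun P => sig_lfp i k O P).
Proof.
move=> P /=; split; first by move=> t _; apply: sig_lfp_fit.
split; first by move=> t [tt _]; apply: sig_lfp_None.
split; first by move=> t _; apply: sig_lfp_sim.
split; first by move=> t j th _ _ jw /sig_lfp_prio ->; rewrite sig_step_winning.
split; first by move=> t j th _ _ _ /sig_lfp_prio.
by split=> tL tR _ _; [apply: sig_lfp_bin_own|apply: sig_lfp_bin_opp].
Qed.

Theorem mainTheorem6 (i k : nat) (O : Omega1) :
  i < k ->
  exists sigma : player -> tree -> sig O,
    (good i k sigma /\ pointwise_minimal i k sigma) /\
    forall sigma' : player -> tree -> sig O,
      good i k sigma' /\ pointwise_minimal i k sigma' ->
      forall P t, well_formed i k t -> sigma' P t = sigma P t.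
Proof.
move=> _; exists (fun P => sig_lfp i k O P).
have minimal : pointwise_minimal i k (fun P => sig_lfp i k O P).
  by move=> sg sg_good P t wt; apply: sig_lfp_le_good.
split=> [|sg [sg_good sg_min] P t wt]; first by split; [apply: sig_lfp_good|apply: minimal].
apply: sig_le_antisym; last exact: sig_lfp_le_good.
exact: sg_min (sig_lfp_good i k O) P t wt.
Qed.
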